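(* Let $\omega=\frac{-1+\sqrt{-3}}{2}$. For $k=1,2,3$ let $C_k\subset\mathbf{C}^2$ be the affine curve $y_k^2=x_k^3-1$ and $g_k(x_k,y_k)=(\omega x_k,-y_k)$. Let $V=C_1\times C_2\times C_3$, $g=g_1\times g_2\times g_3$, and $W=V/\langle g\rangle$. Then the affine coordinate ring $\mathbf{C}[W]$ is the subring $$R=\mathbf{C}[y_1^2,y_2^2,y_3^2,y_1y_2,y_2y_3,y_3y_1,\ x_1^ix_2^jx_3^k\ (0\le i,j,k\le 2,\ i+j+k=3)]$$ of the ring $\tilde R=\mathbf{C}[y_1,y_2,y_3,x_1,x_2,x_3]/(y_1^2-x_1^3+1,\ y_2^2-x_2^3+1,\ y_3^2-x_3^3+1)$.
   Context: $\tilde R$ is the affine coordinate ring of $V$, and $\mathbf{C}[W]$ is identified with the invariant subring $\tilde R^{g}$. *)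

From HB Require Import structures.
From mathcomp Require Import all_boot all_order all_algebra.
From mathcomp Require Import mpoly.
From mathcomp Require Import complex.
From mathcomp Require reals.

Set Implicit Arguments.
Unset Strict Implicit.
Unset Printing Implicit Defensive.
Import Order.TTheory GRing.Theory Num.Theory.
Local Open Scope ring_scope.

(* Polynomial ring C[x1,x2,x3,y1,y2,y3]: variable 'X_k (k<3) is x_(k+1),
   variable 'X_(3+k) is y_(k+1). *)
Section Defs.
Variable C : numClosedFieldType.

Definition P6 := {mpoly C[6]}.

Definition xv (k : 'I_3) : P6 := 'X_(lshift 3 k).
Definition yv (k : 'I_3) : P6 := 'X_(rshift 3 k).

Definition omega : C := (-1 + sqrtC (-3)) / 2%:R.

Definition rel (k : 'I_3) : P6 := yv k ^+ 2 - xv k ^+ 3 + 1.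

Definition in_relI (p : P6) : Prop :=
  exists a : 'I_3 -> P6, p = \sum_(k < 3) a k * rel k.

(* equality in Rtilde = C[y,x]/(relations) *)
Definition eqRt (p q : P6) : Prop := in_relI (p - q).

Definition g_images : 6.-tuple P6 :=
  [tuple (match @split 3 3 i with inl k => omega *: xv k | inr k => - yv k end) | i < 6].
Definition gact (p : P6) : P6 := p \mPo g_images.

Definition x_monomials : seq P6 :=
  [seq xv ord0 ^+ t.1.1 * xv (inord 1) ^+ t.1.2 * xv (inord 2) ^+ t.2
  | t <- [seq (ij, k) | ij <- [seq (i, j) | i <- iota 0 3, j <- iota 0 3],
                          k <- iota 0 3]
  & (t.1.1 + t.1.2 + t.2 == 3)%N].

Definition R_gens : seq P6 :=
  let y0 := yv ord0 in let y1 := yv (inord 1) in let y2 := yv (inord 2) in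
  [:: y0 ^+ 2; y1 ^+ 2; y2 ^+ 2; y0 * y1; y1 * y2; y2 * y0]
  ++ x_monomials.

Definition in_gen_subalg (q : P6) : Prop :=
  exists r : {mpoly C[size R_gens]}, q = r \mPo in_tuple R_gens.

(* the class of p in Rtilde lies in R (image of the generated subalgebra) *)
Definition in_R (p : P6) : Prop := exists q, in_gen_subalg q /\ eqRt p q.

Definition g_invariant (p : P6) : Prop := eqRt (gact p) p.

End Defs.

(* g multiplies each monomial X^m by the sixth root of unity
   g_eigenvalue m = omega^(x-degree of m) * (-1)^(y-degree of m), and it fixes the
   relations.  Every generator of R is g-fixed, so R consists of invariants.
   Conversely, if p is invariant modulo the relations, so is each g^i p, hence
   p is congruent to the average (1/6) sum_(i<6) g^i p; in that average the
   monomials with g_eigenvalue m <> 1 cancel (a geometric sum of a nontrivial root of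
   unity), and those with g_eigenvalue m = 1 have x-degree divisible by 3 and y-degree
   divisible by 2.  Such a monomial is a product of y_k^2, x_k^3 = y_k^2 + 1
   (modulo the relations) and the remaining generators of R. *)

From Pilot Require Import Defs.
From HB Require Import structures.
From mathcomp Require Import all_boot all_order all_algebra.
From mathcomp Require Import mpoly.
From mathcomp Require Import complex.
From mathcomp Require Import reals.
From mathcomp Require Import ring zify.

Set Implicit Arguments.
Unset Strict Implicit.
Unset Printing Implicit Defensive.

Import Order.TTheory GRing.Theory Num.Theory.
Local Open Scope ring_scope.

Lemma prime_root_of_unity_primitive (R : nzRingType) (n : nat) (z : R) :
  prime n -> z ^+ n = 1 -> z != 1 -> n.-primitive_root z.
Proof.
move=> n_prime zn1 z_neq1.
have [m m_prim m_dvd_n] := prim_order_exists (prime_gt0 n_prime) zn1.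
case/primeP: n_prime => _ /(_ m m_dvd_n)/orP[/eqP m1 | /eqP <- //].
by move: z_neq1; rewrite -[z]expr1 -m1 (prim_expr_order m_prim) eqxx.
Qed.

Lemma ord3P (k : 'I_3) : [\/ k = ord0, k = inord 1 | k = inord 2].
Proof.
by case: k => [[|[|[|//]]] k3]; [apply: Or31 | apply: Or32 | apply: Or33];
  apply: val_inj; rewrite /= ?inordK.
Qed.

Lemma prod_ord3 (R : pzSemiRingType) (F : 'I_3 -> R) :
  \prod_(k < 3) F k = F ord0 * F (inord 1) * F (inord 2).
Proof.
rewrite !big_ord_recl big_ord0 mulr1 mulrA.
by congr (F _ * F _ * F _); apply: val_inj; rewrite /= inordK.
Qed.

Lemma sum_ord3 (F : 'I_3 -> nat) :
  (\sum_(k < 3) F k = F ord0 + F (inord 1) + F (inord 2))%N.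
Proof.
rewrite !big_ord_recl big_ord0 addn0 addnA.
by congr (F _ + F _ + F _)%N; apply: val_inj; rewrite /= inordK.
Qed.

Section Invariants.
Variable C : numClosedFieldType.
Local Notation P := (P6 C).
Local Notation om := (omega C).
Local Notation rel := (Pilot.Defs.rel C).
Local Notation in_relI := (@in_relI C).
Local Notation in_gen_subalg := (@in_gen_subalg C).
Local Notation in_R := (@in_R C).

Lemma omega_quadratic : om ^+ 2 + om + 1 = 0.
Proof.
rewrite /omega; set s := sqrtC _.
have s2 : s ^+ 2 = -3 by rewrite /s sqrtCK.
have -> : ((-1 + s) / 2%:R) ^+ 2 + (-1 + s) / 2%:R + 1 = (s ^+ 2 + 3%:R) / 4%:R.
  by field.
by rewrite s2 addNr mul0r.
Qed.

Lemma omega_prim_root : 3.-primitive_root om.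
Proof.
apply: prime_root_of_unity_primitive => //.
  apply/eqP; rewrite -subr_eq0.
  have -> : om ^+ 3 - 1 = (om - 1) * (om ^+ 2 + om + 1) by ring.
  by rewrite omega_quadratic mulr0.
apply/eqP => om1; have := omega_quadratic; rewrite om1 expr1n.
have -> : (1 + 1 + 1 : C) = 3%:R by ring.
by move/eqP; rewrite pnatr_eq0.
Qed.

Lemma omega3 : om ^+ 3 = 1.
Proof. exact: prim_expr_order omega_prim_root. Qed.

Lemma N1_prim_root : 2.-primitive_root (-1 : C).
Proof.
apply: prime_root_of_unity_primitive; rewrite ?sqrrN ?expr1n //.
rewrite eq_sym -subr_eq0 opprK; have -> : (1 + 1 : C) = 2%:R by ring.
by rewrite pnatr_eq0.
Qed.

Lemma omega_sign_eq1 (a b : nat) :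
  om ^+ a * (-1) ^+ b = 1 -> (3 %| a)%N /\ (2 %| b)%N.
Proof.
move=> e.
have om_a : om ^+ a = 1.
  apply/eqP; rewrite -(prim_order_dvd omega_prim_root).
  rewrite -(@Gauss_dvdl 3 a 2) // (prim_order_dvd omega_prim_root) exprM.
  have : (om ^+ a * (-1) ^+ b) ^+ 2 = 1 by rewrite e expr1n.
  by rewrite exprMn -[X in _ * X]exprM mulnC exprM sqrrN !expr1n mulr1 => ->.
split; first by rewrite (prim_order_dvd omega_prim_root) om_a.
by move: e; rewrite om_a mul1r (prim_order_dvd N1_prim_root) => ->.
Qed.

Lemma in_relI0 : in_relI 0.
Proof. by exists (fun=> 0); rewrite big1 // => k _; rewrite mul0r. Qed.

Lemma in_relID p q : in_relI p -> in_relI q -> in_relI (p + q).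
Proof.
move=> [a ->] [b ->]; exists (fun k => a k + b k).
by rewrite -big_split; apply: eq_bigr => k _; rewrite mulrDl.
Qed.

Lemma in_relIMl c p : in_relI p -> in_relI (c * p).
Proof.
move=> [a ->]; exists (fun k => c * a k).
by rewrite mulr_sumr; apply: eq_bigr => k _; rewrite mulrA.
Qed.

Lemma in_relIN p : in_relI p -> in_relI (- p).
Proof. by rewrite -mulN1r; apply: in_relIMl. Qed.

Lemma in_relIB p q : in_relI p -> in_relI q -> in_relI (p - q).
Proof. by move=> Ip Iq; apply: in_relID => //; apply: in_relIN. Qed.

Lemma in_relIZ (c : C) p : in_relI p -> in_relI (c *: p).
Proof. by rewrite -mul_mpolyC; apply: in_relIMl. Qed.

Lemma in_relI_rel k : in_relI (rel k).
Proof.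
exists (fun j => (j == k)%:R); rewrite (bigD1 k) //= eqxx mul1r big1 ?addr0 //.
by move=> j /negbTE ->; rewrite mul0r.
Qed.

Lemma in_gen_subalg1 : in_gen_subalg 1.
Proof. by exists 1; rewrite comp_mpoly1. Qed.

Lemma in_gen_subalgD p q :
  in_gen_subalg p -> in_gen_subalg q -> in_gen_subalg (p + q).
Proof. by move=> [r ->] [s ->]; exists (r + s); rewrite comp_mpolyD. Qed.

Lemma in_gen_subalgM p q :
  in_gen_subalg p -> in_gen_subalg q -> in_gen_subalg (p * q).
Proof. by move=> [r ->] [s ->]; exists (r * s); rewrite rmorphM. Qed.

Lemma in_gen_subalgZ c p : in_gen_subalg p -> in_gen_subalg (c *: p).
Proof. by move=> [r ->]; exists (c *: r); rewrite comp_mpolyZ. Qed.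

Lemma in_gen_subalg_gen q : q \in R_gens C -> in_gen_subalg q.
Proof.
move=> q_gen; have q_idx : (index q (R_gens C) < size (R_gens C))%N.
  by rewrite index_mem.
by exists 'X_(Ordinal q_idx); rewrite comp_mpolyXU /= nth_index.
Qed.

Lemma in_R_gen_subalg q : in_gen_subalg q -> in_R q.
Proof. by move=> Gq; exists q; split; rewrite // /eqRt subrr; apply: in_relI0. Qed.

Lemma in_R_gen q : q \in R_gens C -> in_R q.
Proof. by move=> q_gen; apply/in_R_gen_subalg/in_gen_subalg_gen. Qed.

Lemma in_R_eqRt p q : in_R p -> in_relI (q - p) -> in_R q.
Proof.
move=> [r [Gr Ipr]] Iqp; exists r; split => //.
by rewrite /eqRt -(subrKA p); apply: in_relID.
Qed.

Lemma in_R1 : in_R 1.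
Proof. exact/in_R_gen_subalg/in_gen_subalg1. Qed.

Lemma in_RD p q : in_R p -> in_R q -> in_R (p + q).
Proof.
move=> [r [Gr Ipr]] [s [Gs Iqs]]; exists (r + s); split; first exact: in_gen_subalgD.
by rewrite /eqRt opprD addrACA; apply: in_relID.
Qed.

Lemma in_RZ c p : in_R p -> in_R (c *: p).
Proof.
move=> [r [Gr Ipr]]; exists (c *: r); split; first exact: in_gen_subalgZ.
by rewrite /eqRt -scalerBr; apply: in_relIZ.
Qed.

Lemma in_R0 : in_R 0.
Proof. by rewrite -(scale0r 1); apply/in_RZ/in_R1. Qed.

Lemma in_RM p q : in_R p -> in_R q -> in_R (p * q).
Proof.
move=> [r [Gr Ipr]] [s [Gs Iqs]]; exists (r * s); split; first exact: in_gen_subalgM.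
rewrite /eqRt (_ : p * q - r * s = p * (q - s) + s * (p - r)); last by ring.
by apply: in_relID; apply: in_relIMl.
Qed.

Lemma in_RX p n : in_R p -> in_R (p ^+ n).
Proof.
by move=> Rp; elim: n => [|n IHn]; rewrite ?expr0 ?exprS; [apply: in_R1 | apply: in_RM].
Qed.

Lemma in_R_sum (I : Type) (r : seq I) (F : I -> P) :
  (forall i, in_R (F i)) -> in_R (\sum_(i <- r) F i).
Proof. by move=> RF; apply: big_ind => //; [apply: in_R0 | apply: in_RD]. Qed.

Lemma in_R_prod (I : Type) (r : seq I) (F : I -> P) :
  (forall i, in_R (F i)) -> in_R (\prod_(i <- r) F i).
Proof. by move=> RF; apply: big_ind => //; [apply: in_R1 | apply: in_RM]. Qed.

Lemma gact_xv k : gact (xv C k) = om *: xv C k.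
Proof. by rewrite /gact /xv comp_mpolyXU -tnth_nth tnth_mktuple (unsplitK (inl k)). Qed.

Lemma gact_yv k : gact (yv C k) = - yv C k.
Proof. by rewrite /gact /yv comp_mpolyXU -tnth_nth tnth_mktuple (unsplitK (inr k)). Qed.

Lemma gact_rel k : gact (rel k) = rel k.
Proof.
rewrite /Pilot.Defs.rel /gact !(rmorphD, rmorphN, rmorphXn, rmorph1) /=.
by rewrite -!/(gact _) gact_xv gact_yv sqrrN exprZn omega3 scale1r.
Qed.

Lemma in_relI_gact p : in_relI p -> in_relI (gact p).
Proof.
move=> [a ->]; exists (fun k => gact (a k)).
rewrite /gact rmorph_sum; apply: eq_bigr => k _.
by rewrite rmorphM /= -/(gact (rel k)) gact_rel.
Qed.

Definition xdeg (m : 'X_{1..6}) : nat := \sum_(k < 3) m (lshift 3 k).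
Definition ydeg (m : 'X_{1..6}) : nat := \sum_(k < 3) m (rshift 3 k).
Definition g_eigenvalue (m : 'X_{1..6}) : C := om ^+ xdeg m * (-1) ^+ ydeg m.

Lemma mpolyX_split (m : 'X_{1..6}) : 'X_[m] =
  (\prod_(k < 3) xv C k ^+ m (lshift 3 k)) * \prod_(k < 3) yv C k ^+ m (rshift 3 k).
Proof. by rewrite mpolyXE_id (@big_split_ord _ _ _ 3 3). Qed.

Lemma gact_mpolyX m : gact 'X_[m] = g_eigenvalue m *: 'X_[m].
Proof.
rewrite mpolyX_split /gact rmorphM !rmorph_prod /=.
under eq_bigr do rewrite rmorphXn /= -/(gact _) gact_xv exprZn.
under [X in _ * X]eq_bigr do rewrite rmorphXn /= -/(gact _) gact_yv -scaleN1r exprZn.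
by rewrite !scaler_prod !prodrXr -scalerAl -scalerAr scalerA.
Qed.

Lemma iter_gact i p :
  iter i (@gact C) p = \sum_(m <- msupp p) (p@_m * g_eigenvalue m ^+ i) *: 'X_[m].
Proof.
elim: i => [|i IHi] /=.
  by rewrite {1}(mpolyE p); apply: eq_bigr => m _; rewrite mulr1.
rewrite IHi /gact raddf_sum /=; apply: eq_bigr => m _.
by rewrite comp_mpolyZ -/(gact _) gact_mpolyX scalerA -mulrA -exprSr.
Qed.

Lemma in_relI_iter_gact i p :
  g_invariant p -> in_relI (iter i (@gact C) p - p).
Proof.
move=> inv_p; elim: i => [|i IHi] /=; first by rewrite subrr; apply: in_relI0.
rewrite -(subrKA (gact p)) -raddfB.
by apply: in_relID => //; apply: in_relI_gact.
Qed.

Lemma sum_g_eigenvalue_pow m :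
  g_eigenvalue m != 1 -> \sum_(i < 6) g_eigenvalue m ^+ i = 0.
Proof.
move=> eig_neq1; have eig6 : g_eigenvalue m ^+ 6 = 1.
  rewrite /g_eigenvalue exprMn -!exprM !(mulnC _ 6) !exprM.
  by rewrite (exprM om 3 2) omega3 (exprM (-1) 2 3) sqrrN !expr1n mulr1.
apply/eqP; have := subrX1 (g_eigenvalue m) 6.
by rewrite eig6 subrr => /esym/eqP; rewrite mulf_eq0 subr_eq0 (negbTE eig_neq1).
Qed.

Lemma gact_R_gens q : q \in R_gens C -> gact q = q.
Proof.
have gact_yy j k : gact (yv C j * yv C k) = yv C j * yv C k.
  by rewrite /gact rmorphM /= -!/(gact _) !gact_yv mulrNN.
rewrite /R_gens mem_cat => /orP[|/mapP[[[a b] c]]].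
  by rewrite !inE => /orP[|/orP[|/orP[|/orP[|/orP[|]]]]] /eqP ->; rewrite ?expr2 gact_yy.
rewrite mem_filter /= => /andP[/eqP abc _] ->.
rewrite /gact !(rmorphM, rmorphXn) /= -!/(gact _) !gact_xv !exprZn.
rewrite -!scalerAl -!scalerAr !scalerA -!exprD -scalerAl scalerA -exprD.
by rewrite addnAC abc omega3 scale1r.
Qed.

Lemma gact_gen_subalg q : in_gen_subalg q -> gact q = q.
Proof.
move=> [r ->]; rewrite comp_mpolyE /gact raddf_sum /=; apply: eq_bigr => m _.
rewrite comp_mpolyZ rmorph_prod /=; congr (_ *: _); apply: eq_bigr => i _.
by rewrite rmorphXn /= -/(gact _) gact_R_gens // mem_tnth.
Qed.

Local Notation x0 := (xv C ord0).
Local Notation x1 := (xv C (inord 1)).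
Local Notation x2 := (xv C (inord 2)).
Local Notation y0 := (yv C ord0).
Local Notation y1 := (yv C (inord 1)).
Local Notation y2 := (yv C (inord 2)).

Lemma in_R_prod_pow_mod (I : finType) (z : I -> P) (a : I -> nat) n :
  (forall i, in_R (z i ^+ n)) -> in_R (\prod_i z i ^+ (a i %% n)) ->
  in_R (\prod_i z i ^+ a i).
Proof.
move=> Rzn Rmod.
under eq_bigr do rewrite (divn_eq (a _) n) addnC exprD mulnC exprM.
by rewrite big_split /=; apply: in_RM => //; apply: in_R_prod => i; apply: in_RX.
Qed.

Lemma in_R_y2 k : in_R (yv C k ^+ 2).
Proof.
apply: in_R_gen; rewrite /R_gens mem_cat !inE.
by case: (ord3P k) => ->; rewrite eqxx ?orbT.
Qed.

Lemma in_R_x3 k : in_R (xv C k ^+ 3).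
Proof.
apply: (@in_R_eqRt (yv C k ^+ 2 + 1)).
  by apply: in_RD; [apply: in_R_y2 | apply: in_R1].
have -> : xv C k ^+ 3 - (yv C k ^+ 2 + 1) = - rel k by rewrite /Pilot.Defs.rel; ring.
exact/in_relIN/in_relI_rel.
Qed.

Lemma in_R_x_monomial_reduced a0 a1 a2 :
  (a0 < 3)%N -> (a1 < 3)%N -> (a2 < 3)%N -> (3 %| a0 + a1 + a2)%N ->
  in_R (x0 ^+ a0 * x1 ^+ a1 * x2 ^+ a2).
Proof.
have gen b0 b1 b2 : (b0 < 3)%N -> (b1 < 3)%N -> (b2 < 3)%N -> (b0 + b1 + b2 = 3)%N ->
    in_R (x0 ^+ b0 * x1 ^+ b1 * x2 ^+ b2).
  move=> b0_lt b1_lt b2_lt b_sum; apply: in_R_gen.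
  rewrite /R_gens mem_cat; apply/orP; right; apply/mapP; exists ((b0, b1), b2) => //.
  rewrite mem_filter /= b_sum eqxx /=.
  by move: b0_lt b1_lt b2_lt {b_sum}; case: b0 => [|[|[|//]]]; case: b1 => [|[|[|//]]];
    case: b2 => [|[|[|//]]].
case: a0 => [|[|[|//]]]; case: a1 => [|[|[|//]]]; case: a2 => [|[|[|//]]] //= _ _ _ _;
  try by apply: gen.
- by rewrite !expr0 !mulr1; apply: in_R1.
- have -> : x0 ^+ 2 * x1 ^+ 2 * x2 ^+ 2 = (x0 ^+ 1 * x1 ^+ 1 * x2 ^+ 1) ^+ 2 by ring.
  by apply/in_RX/gen.
Qed.

Lemma in_R_y_monomial_reduced b0 b1 b2 :
  (b0 < 2)%N -> (b1 < 2)%N -> (b2 < 2)%N -> (2 %| b0 + b1 + b2)%N ->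
  in_R (y0 ^+ b0 * y1 ^+ b1 * y2 ^+ b2).
Proof.
case: b0 => [|[|//]]; case: b1 => [|[|//]]; case: b2 => [|[|//]] //= _ _ _ _.
- by rewrite !expr0 !mulr1; apply: in_R1.
- by rewrite expr0 mul1r !expr1; apply: in_R_gen; rewrite /R_gens mem_cat !inE eqxx ?orbT.
- have -> : y0 ^+ 1 * y1 ^+ 0 * y2 ^+ 1 = y2 * y0 by ring.
  by apply: in_R_gen; rewrite /R_gens mem_cat !inE eqxx ?orbT.
- by rewrite expr0 mulr1 !expr1; apply: in_R_gen; rewrite /R_gens mem_cat !inE eqxx ?orbT.
Qed.

Lemma in_R_x_monomial (a : 'I_3 -> nat) :
  (3 %| \sum_(k < 3) a k)%N -> in_R (\prod_(k < 3) xv C k ^+ a k).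
Proof.
rewrite sum_ord3 => a_dvd; apply: (@in_R_prod_pow_mod _ _ a 3 in_R_x3).
rewrite prod_ord3; apply: in_R_x_monomial_reduced; rewrite ?ltn_pmod //.
by move: a_dvd; lia.
Qed.

Lemma in_R_y_monomial (b : 'I_3 -> nat) :
  (2 %| \sum_(k < 3) b k)%N -> in_R (\prod_(k < 3) yv C k ^+ b k).
Proof.
rewrite sum_ord3 => b_dvd; apply: (@in_R_prod_pow_mod _ _ b 2 in_R_y2).
rewrite prod_ord3; apply: in_R_y_monomial_reduced; rewrite ?ltn_pmod //.
by move: b_dvd; lia.
Qed.

Lemma in_R_mpolyX m : g_eigenvalue m = 1 -> in_R 'X_[m].
Proof.
move=> /omega_sign_eq1 [x_dvd y_dvd]; rewrite mpolyX_split.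
by apply: in_RM; [apply: in_R_x_monomial | apply: in_R_y_monomial].
Qed.

Lemma g_invariant_in_R p : g_invariant p -> in_R p.
Proof.
move=> inv_p; set q := \sum_(i < 6) iter i (@gact C) p.
have q_p6 : in_relI (q - p *+ 6).
  rewrite (_ : p *+ 6 = \sum_(i < 6) p); last by rewrite sumr_const card_ord.
  rewrite -sumrB.
  apply: big_ind => [||i _]; [exact: in_relI0 | exact: in_relID |].
  exact: in_relI_iter_gact.
have Rq : in_R q.
  rewrite /q; under eq_bigr do rewrite iter_gact.
  rewrite exchange_big /=; apply: in_R_sum => m.
  rewrite -scaler_suml -mulr_sumr.
  have [eig1 | eig_neq1] := eqVneq (g_eigenvalue m) 1; first exact/in_RZ/in_R_mpolyX.
  by rewrite sum_g_eigenvalue_pow // mulr0 scale0r; apply: in_R0.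
apply: (@in_R_eqRt (6%:R^-1 *: q)); first exact: in_RZ.
have six_neq0 : (6%:R : C) != 0 by rewrite pnatr_eq0.
have -> : p - 6%:R^-1 *: q = 6%:R^-1 *: - (q - p *+ 6).
  by rewrite opprB scalerBr -scaler_nat scalerA mulVf // scale1r.
exact/in_relIZ/in_relIN.
Qed.

Lemma in_R_g_invariant p : in_R p -> g_invariant p.
Proof.
move=> [q [Gq Ipq]]; have gactB : gact (p - q) = gact p - gact q by exact: raddfB.
rewrite /g_invariant /eqRt (_ : gact p - p = gact (p - q) - (p - q)).
  by apply: in_relIB => //; apply: in_relI_gact.
by rewrite gactB (gact_gen_subalg Gq) opprB addrA subrK.
Qed.

End Invariants.

Theorem lemma2p2 (R : realType) (p : {mpoly (complex R)[6]}) :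
  g_invariant p <-> in_R p.
Proof. by split; [apply: g_invariant_in_R | apply: in_R_g_invariant]. Qed.
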